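(* Let $\Sigma$ be a $(\mathbf d,\mathbf z)$-cluster pattern with principal coefficients. Then every $y$-variable $y^t_i\in\mathrm{Trop}(\mathbf y,\mathbf z)$ of $\Sigma$ is a Laurent monomial in $y_1,\dots,y_n$ alone (with coefficient $1$), i.e. none of the variables $z_{i,s}$ occurs in it.
   Context: $[a]_+=\max(a,0)$. Mutation data: positive integers $\mathbf d=(d_1,\dots,d_n)$ and frozen coefficients $z_{i,s}$ ($1\le s\le d_i-1$) with $z_{i,s}=z_{i,d_i-s}$, $z_{i,0}=z_{i,d_i}=1$. Regard $y_1,\dots,y_n$ and the $z_{i,s}$ as formal variables; $\mathrm{Trop}(\mathbf y,\mathbf z)$ is the free abelian multiplicative group they generate with $\oplus$ given by componentwise minimum of exponents. The $(\mathbf d,\mathbf z)$-mutation at $k$ acts on a skew-symmetrizable exchange matrix $B=(b_{ij})$ and $y$-variables by: $b'_{ij}=-b_{ij}$ if $i=k$ or $j=k$, else $b'_{ij}=b_{ij}+d_k([-b_{ik}]_+b_{kj}+b_{ik}[b_{kj}]_+)$; $y'_k=y_k^{-1}$, $y'_i=y_i(y_k^{[\varepsilon b_{ki}]_+})^{d_k}(\bigoplus_{s=0}^{d_k}z_{k,s}y_k^{\varepsilon s})^{-b_{ki}}$ ($i\neq k$), $\varepsilon\in\{\pm1\}$ (cluster variables also mutate, irrelevant here). $\mathbb T_n$ is the $n$-regular tree with edges labeled $1,\dots,n$, distinct labels at each vertex. A $(\mathbf d,\mathbf z)$-cluster pattern with principal coefficients assigns to each vertex $t$ a seed $(\mathbf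 x_t,\mathbf y_t,B_t)$, $\mathbf y_t=(y^t_1,\dots,y^t_n)\in\mathrm{Trop}(\mathbf y,\mathbf z)^n$, such that seeds at vertices joined by an edge labeled $k$ are related by the mutation at $k$, and the seed at a fixed initial vertex $t_0$ has $y$-variables the generators $y_1,\dots,y_n$ (initial cluster and skew-symmetrizable $B$ arbitrary). *)

From HB Require Import structures.
From mathcomp Require Import all_boot all_order all_algebra.
Set Implicit Arguments. Unset Strict Implicit. Unset Printing Implicit Defensive.
Import Order.TTheory GRing.Theory Num.Theory.
Local Open Scope ring_scope.

Definition pos_part (a : int) : int := Num.max a 0.

(* Elements of Trop(y, z): Laurent monomials in the y_j and z_{j,s}, encoded by
   their exponent vectors.  [ye j] is the exponent of y_j; [ze j s] is the
   exponent of the generator z_{j,s} where s is the canonical representative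
   min(s, d_j - s) of the pair {s, d_j - s} (1 <= s <= d_j - 1), reflecting the
   identification z_{j,s} = z_{j,d_j-s}.  Other entries are never touched. *)
Record TropE (n : nat) := MkTrop { ye : 'I_n -> int; ze : 'I_n -> nat -> int }.

Section Trop.
Variable n : nat.
Implicit Types a b : TropE n.

Definition tmul a b : TropE n :=
  MkTrop (fun j => ye a j + ye b j) (fun j s => ze a j s + ze b j s).
Definition tpow a (m : int) : TropE n :=
  MkTrop (fun j => ye a j * m) (fun j s => ze a j s * m).
Definition tinv a : TropE n := tpow a (-1).
Definition tone : TropE n := MkTrop (fun _ => 0) (fun _ _ => 0).
Definition toplus a b : TropE n :=
  MkTrop (fun j => Num.min (ye a j) (ye b j)) (fun j s => Num.min (ze a j s) (ze b j s)).
Definition tbigoplus (m : nat) (f : nat -> TropE n) : TropE n :=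
  foldl (fun acc s => toplus acc (f s)) (f 0%N) (iota 1 m).

Definition ygen (j : 'I_n) : TropE n :=
  MkTrop (fun i => if i == j then 1 else 0) (fun _ _ => 0).
Definition zgen (d : 'I_n -> nat) (j : 'I_n) (s : nat) : TropE n :=
  if (0 < s < d j)%N then
    MkTrop (fun _ => 0)
      (fun i t => if (i == j) && (t == minn s (d j - s)) then 1 else 0)
  else tone.
End Trop.

(* Seeds (cluster variables omitted: they play no role here) *)
Record Seed (n : nat) := MkSeed { Yv : 'I_n -> TropE n; Bm : 'M[int]_n }.

Definition skew_symmetrizable n (B : 'M[int]_n) : Prop :=
  exists r : 'I_n -> nat, (forall i, 0 < r i)%N /\
    forall i j, (r i)%:Z * B i j = - ((r j)%:Z * B j i).

Definition mutB n (d : 'I_n -> nat) (k : 'I_n) (B : 'M[int]_n) : 'M[int]_n :=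
  \matrix_(i, j)
    if (i == k) || (j == k) then - B i j
    else B i j + (d k)%:Z * (pos_part (- B i k) * B k j + B i k * pos_part (B k j)).

Definition mutY n (d : 'I_n -> nat) (k : 'I_n) (eps : int) (B : 'M[int]_n)
    (Y : 'I_n -> TropE n) : 'I_n -> TropE n :=
  fun i =>
    if i == k then tinv (Y k)
    else tmul (tmul (Y i) (tpow (tpow (Y k) (pos_part (eps * B k i))) (d k)%:Z))
              (tpow (tbigoplus (d k) (fun s => tmul (zgen d k s) (tpow (Y k) (eps * s%:Z))))
                    (- B k i)).

Definition mutate n (d : 'I_n -> nat) (k : 'I_n) (eps : int) (S : Seed n) : Seed n :=
  MkSeed (mutY d k eps (Bm S) (Yv S)) (mutB d k (Bm S)).

Definition mut_related n (d : 'I_n -> nat) (k : 'I_n) (S S' : Seed n) : Prop :=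
  exists eps : int, (eps = 1 \/ eps = -1) /\ S' = mutate d k eps S.

(* The n-regular tree T_n: vertices are reduced words in the labels 'I_n (no two
   consecutive equal letters), the empty word is the initial vertex t0, and the
   edge labelled k joins w and rcons w k whenever the latter is reduced. *)
Definition reduced n (w : seq 'I_n) : bool := sorted (fun a b => a != b) w.

Definition is_principal_pattern n (d : 'I_n -> nat) (Sig : seq 'I_n -> Seed n) : Prop :=
  Yv (Sig [::]) = @ygen n /\ skew_symmetrizable (Bm (Sig [::])) /\
  forall (w : seq 'I_n) (k : 'I_n), reduced (rcons w k) ->
    mut_related d k (Sig w) (Sig (rcons w k)) /\
    mut_related d k (Sig (rcons w k)) (Sig w).

From mathcomp Require Import all_boot all_order all_algebra.
Import Order.TTheory GRing.Theory Num.Theory.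
Local Open Scope ring_scope.

(* The only place a frozen coefficient can enter a y-variable is the tropical
   sum \bigoplus_{s=0}^{d_k} z_{k,s} y_k^{eps s} in the mutation rule.  If y_k
   is z-free, every summand has nonnegative z-exponents and the summand s = 0,
   namely z_{k,0} = 1, has all z-exponents zero; since the tropical sum takes
   componentwise minima, the whole sum is z-free.  Products and powers of
   z-free elements being z-free, z-freeness propagates along every edge of the
   tree from the initial seed. *)

Section ZFree.
Variable n : nat.
Implicit Types a b : TropE n.

Definition zfree a : Prop := forall j s, ze a j s = 0.
Definition znonneg a : Prop := forall j s, 0 <= ze a j s.

Lemma zfree_znonneg a : zfree a -> znonneg a.
Proof. by move=> za j s; rewrite za. Qed.

Lemma zfree_ygen j : zfree (ygen j).
Proof. by []. Qed.

Lemma zfree_tmul a b : zfree a -> zfree b -> zfree (tmul a b).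
Proof. by move=> za zb j s; rewrite /= za zb addr0. Qed.

Lemma zfree_tpow a m : zfree a -> zfree (tpow a m).
Proof. by move=> za j s; rewrite /= za mul0r. Qed.

Lemma znonneg_tmul a b : znonneg a -> znonneg b -> znonneg (tmul a b).
Proof. by move=> za zb j s; rewrite /= addr_ge0. Qed.

Lemma znonneg_zgen (d : 'I_n -> nat) k s : znonneg (zgen d k s).
Proof. by rewrite /zgen; case: ifP => // _ j t /=; case: ifP. Qed.

Lemma zgen0 (d : 'I_n -> nat) k : zgen d k 0 = @tone n.
Proof. by []. Qed.

Lemma zfree_toplus a b : zfree a -> znonneg b -> zfree (toplus a b).
Proof. by move=> za zb j s; rewrite /= za; apply/min_idPl/zb. Qed.

Lemma zfree_tbigoplus m (f : nat -> TropE n) :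
  zfree (f 0%N) -> (forall s, znonneg (f s)) -> zfree (tbigoplus m f).
Proof.
rewrite /tbigoplus; elim: (iota 1 m) (f 0%N) => [|s l IH] //= acc zacc zf.
exact/IH/zf/zfree_toplus/zf.
Qed.

Lemma zfree_mutY (d : 'I_n -> nat) k eps (B : 'M[int]_n) (Y : 'I_n -> TropE n) :
  (forall i, zfree (Y i)) -> forall i, zfree (mutY d k eps B Y i).
Proof.
move=> zY i; rewrite /mutY; case: (i == k); first exact/zfree_tpow.
apply/zfree_tmul/zfree_tpow/zfree_tbigoplus.
- exact/zfree_tmul/zfree_tpow/zfree_tpow.
- by rewrite zgen0; apply/zfree_tmul/zfree_tpow.
- by move=> s; apply: znonneg_tmul; [apply: znonneg_zgen | apply/zfree_znonneg/zfree_tpow].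
Qed.

End ZFree.

Lemma reduced_rcons n (w : seq 'I_n) k : reduced (rcons w k) -> reduced w.
Proof. by case: w => [|x p] //; rewrite /reduced /= rcons_path => /andP[]. Qed.

Theorem mainTheorem5 (n : nat) (d : 'I_n -> nat) (Sig : seq 'I_n -> Seed n) :
  (forall i, (0 < d i)%N) ->
  is_principal_pattern d Sig ->
  forall (w : seq 'I_n), reduced w ->
  forall (i j : 'I_n) (s : nat), ze (Yv (Sig w) i) j s = 0.
Proof.
move=> _ [Y0 [_ mutSig]] w; elim/last_ind: w => [|w k IH] red_wk i.
  by rewrite Y0; apply: zfree_ygen.
have [[eps [_ ->]] _] := mutSig w k red_wk.
by apply: zfree_mutY => i'; apply/IH/reduced_rcons/red_wk.
Qed.
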